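(* For every $n\ge2$, the identity $x^2=x^3$ holds in the inverse semigroup $(S_n,\cdot,{}^{-1})$.
   Context: For $n\ge2$, $(S_n,\cdot,{}^{-1})$ is the inverse semigroup of partial one-to-one transformations of $\{0,1,\dots,3n+2\}$ (acting on the right, composition $x(\alpha\beta)=(x\alpha)\beta$) generated by the partial maps $\chi:\ n\mapsto 2n+1,\ n+1\mapsto 2n+2$ and, for $i=1,\dots,n$, $\chi_i:\ i-1\mapsto i,\ n+1+i\mapsto n+i,\ 2n+1+i\mapsto 2n+2+i$ (each undefined elsewhere). *)

From mathcomp Require Import all_boot.
Set Implicit Arguments. Unset Strict Implicit. Unset Printing Implicit Defensive.

Definition pt (n : nat) := 'I_(3 * n + 3).

Definition ptrans (n : nat) := {ffun pt n -> option (pt n)}.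

(* Composition acting on the right: x (a b) = (x a) b. *)
Definition tcomp n (a b : ptrans n) : ptrans n := [ffun x => obind b (a x)].

Definition tinv n (a : ptrans n) : ptrans n := [ffun y => [pick x | a x == Some y]].

Definition mkp n (f : nat -> option nat) : ptrans n :=
  [ffun x : pt n => obind (fun y => insub y) (f (val x))].

Definition chi n : ptrans n :=
  mkp n (fun x => if x == n then Some (2 * n + 1)
                  else if x == n + 1 then Some (2 * n + 2) else None).

Definition chi_i n (i : nat) : ptrans n :=
  mkp n (fun x => if x == i - 1 then Some i
                  else if x == n + 1 + i then Some (n + i)
                  else if x == 2 * n + 1 + i then Some (2 * n + 2 + i) else None).

Inductive generator n : ptrans n -> Prop :=
| gen_chi : generator (chi n)
| gen_chi_i i : 1 <= i <= n -> generator (chi_i n i).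

Inductive inS n : ptrans n -> Prop :=
| inS_gen a : generator a -> inS a
| inS_inv a : inS a -> inS (tinv a)
| inS_mul a b : inS a -> inS b -> inS (tcomp a b).

From mathcomp Require Import all_boot zify.
From Stdlib Require Import ZArith Lia.
Set Implicit Arguments. Unset Strict Implicit. Unset Printing Implicit Defensive.

(* Relabelled by [pos], the points lie on the line 1..3(n+1) and every generator moves each
   point of its domain one step up; the domain of a generator is the set of all edges of one
   [edge_class].  Hence every element of S_n is a partial translation by some d such that,
   for any two points p, p' of its domain, the steps from p and from p' cross edges of the same
   classes ([coherent_shift]).  If d = 0 the element is a partial identity.  If d <> 0, a point
   moved twice would make the shift by d preserve the classes of all edges from p to p + d;
   but for 0 < |d| < 2(n+1) no such shift preserves the classes of two consecutive edges, nor
   of one edge when |d| = 1.  So x^2 is nowhere defined, and x^2 = x^3. *)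

Lemma mkp_some n f (x y : pt n) : mkp n f x = Some y -> f x = Some (y : nat).
Proof.
rewrite ffunE; case: (f x) => //= v.
by case: insubP => // u _ <- [<-].
Qed.

Lemma tcomp_some n (a b : ptrans n) x z : tcomp a b x = Some z ->
  exists2 y, a x = Some y & b y = Some z.
Proof. by rewrite ffunE; case: (a x) => //= y; exists y. Qed.

Lemma tinv_some n (a : ptrans n) x y : tinv a x = Some y -> a y = Some x.
Proof. by rewrite ffunE; case: pickP => // z /eqP ax [<-]. Qed.

Local Open Scope Z_scope.

(* The middle block n+1..2n+1 is reversed, so that every generator moves points by +1. *)
Definition pos n (x : pt n) : Z :=
  if (n < x < 2 * n.+1)%nat then 3 * Z.of_nat n.+1 - Z.of_nat x else Z.of_nat x + 1.

Lemma posP n (x : pt n) :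
  (x <= n)%nat /\ pos x = Z.of_nat x + 1 \/
  (n < x < 2 * n.+1)%nat /\ pos x = 3 * Z.of_nat n.+1 - Z.of_nat x \/
  (2 * n.+1 <= x < 3 * n.+1)%nat /\ pos x = Z.of_nat x + 1.
Proof. by have := ltn_ord x; rewrite /pos; case: ifP; lia. Qed.

Lemma pos_bounds n (x : pt n) : 1 <= pos x <= 3 * Z.of_nat n.+1.
Proof. by have := posP x; lia. Qed.

Lemma pos_inj n : injective (@pos n).
Proof. by move=> x y; have := posP x; have := posP y => ? ? ?; apply: ord_inj; lia. Qed.

(* Class of the edge joining positions e and e + 1 of the line 1..3N, N = n + 1: the domain
   of chi_i consists exactly of the edges of class i, that of chi of the two edges of class 0. *)
Definition edge_class (N e : Z) : Z :=
  if e <? N then e else if e =? N then 0 else if e <? 2 * N then 2 * N - e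
  else if e =? 2 * N then 0 else e - 2 * N.

Lemma edge_classP (N e : Z) :
  e < N /\ edge_class N e = e \/ e = N /\ edge_class N e = 0 \/
  N < e < 2 * N /\ edge_class N e = 2 * N - e \/
  e = 2 * N /\ edge_class N e = 0 \/ 2 * N < e /\ edge_class N e = e - 2 * N.
Proof.
rewrite /edge_class.
case: Z.ltb_spec => ?; first by left.
case: Z.eqb_spec => ?; first by right; left.
case: Z.ltb_spec => ?; first by do 2 right; left; split=> //; lia.
case: Z.eqb_spec => ?; first by do 3 right; left.
by do 4 right; split=> //; lia.
Qed.

Lemma edge_class_neighbour (N e d : Z) : 2 <= N -> Z.abs d = 1 ->
  1 <= Z.min e (e + d) -> Z.max e (e + d) < 3 * N ->
  edge_class N (e + d) <> edge_class N e.
Proof.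
by case: (edge_classP N e) => [[? ->]|[[? ->]|[[? ->]|[[? ->]|[? ->]]]]];
  case: (edge_classP N (e + d)) => [[? ->]|[[? ->]|[[? ->]|[[? ->]|[? ->]]]]]; lia.
Qed.

Lemma edge_class_pair (N e d : Z) : 3 <= N -> 0 < Z.abs d < 2 * N ->
  1 <= Z.min e (e + d) -> Z.max e (e + d) + 1 < 3 * N ->
  edge_class N (e + d) = edge_class N e ->
  edge_class N (e + 1 + d) <> edge_class N (e + 1).
Proof.
by case: (edge_classP N e) => [[? ->]|[[? ->]|[[? ->]|[[? ->]|[? ->]]]]];
  case: (edge_classP N (e + 1)) => [[? ->]|[[? ->]|[[? ->]|[[? ->]|[? ->]]]]];
  case: (edge_classP N (e + d)) => [[? ->]|[[? ->]|[[? ->]|[[? ->]|[? ->]]]]];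
  case: (edge_classP N (e + 1 + d)) => [[? ->]|[[? ->]|[[? ->]|[[? ->]|[? ->]]]]]; lia.
Qed.

Definition crosses (r d e : Z) := Z.min r (r + d) <= e < Z.max r (r + d).

Definition classes_match (N r d s : Z) :=
  forall e, crosses r d e -> edge_class N (e + s) = edge_class N e.

Lemma not_classes_match_self (N r d : Z) : 3 <= N -> d <> 0 ->
  1 <= r <= 3 * N -> 1 <= r + 2 * d <= 3 * N -> ~ classes_match N r d d.
Proof.
move=> N_ge3 d_neq0 r_bounds r2d_bounds match_d.
set e := Z.min r (r + d).
have cross_e : crosses r d e by rewrite /crosses; lia.
have [d_unit|d_ge2] : Z.abs d = 1 \/ 2 <= Z.abs d by lia.
- by apply: (edge_class_neighbour (e := e) (d := d)) (match_d e cross_e); lia.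
- apply: (edge_class_pair (e := e) (d := d)) (match_d e cross_e) _; try lia.
  by apply: match_d; rewrite /crosses; lia.
Qed.

Lemma generator_shift n (g : ptrans n) : generator g -> exists c,
  forall x y, g x = Some y -> pos y = pos x + 1 /\ edge_class (Z.of_nat n.+1) (pos x) = c.
Proof.
case=> [|i /andP[i_ge1 i_le_n]]; [exists 0 | exists (Z.of_nat i)] => x y /(@mkp_some n);
  by repeat case: ifP => [/eqP x_eq [y_eq] | _] //;
     have := posP x; have := posP y; have := edge_classP (Z.of_nat n.+1) (pos x); lia.
Qed.

Definition coherent_shift n (x : ptrans n) (d : Z) :=
  (forall p q, x p = Some q -> pos q = pos p + d) /\
  (forall p q p' q', x p = Some q -> x p' = Some q' ->
     classes_match (Z.of_nat n.+1) (pos p) d (pos p' - pos p)).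

Lemma generator_coherent n (g : ptrans n) : generator g -> coherent_shift g 1.
Proof.
case/generator_shift=> c g_step; split=> [p q /g_step[] //|p q p' q' gp gp' e].
rewrite /crosses => cross_e; have -> : e = pos p by lia.
have -> : pos p + (pos p' - pos p) = pos p' by lia.
by have [_ ->] := g_step _ _ gp'; have [_ ->] := g_step _ _ gp.
Qed.

Lemma tcomp_coherent n (a b : ptrans n) (da db : Z) :
  coherent_shift a da -> coherent_shift b db -> coherent_shift (tcomp a b) (da + db).
Proof.
move=> [a_shift a_match] [b_shift b_match]; split.
  by move=> p q /tcomp_some[m /a_shift m_pos /b_shift q_pos]; lia.
move=> p q p' q' /tcomp_some[m am bm] /tcomp_some[m' am' bm'] e.
have m_pos := a_shift _ _ am; have m'_pos := a_shift _ _ am'.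
rewrite /crosses => cross_e.
have [cross_a|cross_b] : crosses (pos p) da e \/ crosses (pos m) db e.
  by rewrite /crosses; lia.
- exact: a_match am am' e cross_a.
- have -> : pos p' - pos p = pos m' - pos m by lia.
  exact: b_match bm bm' e cross_b.
Qed.

Lemma tinv_coherent n (a : ptrans n) (d : Z) :
  coherent_shift a d -> coherent_shift (tinv a) (- d).
Proof.
move=> [a_shift a_match]; split.
  by move=> p q /tinv_some /a_shift; lia.
move=> p q p' q' /tinv_some aq /tinv_some aq' e.
have p_pos := a_shift _ _ aq; have p'_pos := a_shift _ _ aq'.
have -> : pos p' - pos p = pos q' - pos q by lia.
by rewrite /crosses => cross_e; apply: (a_match _ _ _ _ aq aq'); rewrite /crosses; lia.
Qed.

Lemma inS_coherent n (x : ptrans n) : inS x -> exists d, coherent_shift x d.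
Proof.
elim=> [g /generator_coherent|a _ [d /tinv_coherent]|a b _ [da ha] _ [db hb]];
  by [exists 1 | exists (- d) | exists (da + db); exact: tcomp_coherent].
Qed.

Lemma coherent_shift0_fix n (x : ptrans n) p q :
  coherent_shift x 0 -> x p = Some q -> x q = Some q.
Proof.
move=> [x_shift _] xp.
have /pos_inj qp : pos q = pos p by rewrite (x_shift _ _ xp) Z.add_0_r.
by rewrite {1}qp.
Qed.

Lemma coherent_shift_sq_undef n (x : ptrans n) (d : Z) p q : (2 <= n)%nat -> d <> 0 ->
  coherent_shift x d -> x p = Some q -> x q = None.
Proof.
move=> n_ge2 d_neq0 [x_shift x_match] xp; case xq: (x q) => [q'|] //; exfalso.
have q_pos := x_shift _ _ xp; have q'_pos := x_shift _ _ xq.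
have := x_match _ _ _ _ xp xq; rewrite q_pos Z.add_simpl_l.
apply: (@not_classes_match_self _ _ _ _ d_neq0); [lia | exact: pos_bounds |].
by have := pos_bounds q'; lia.
Qed.

Close Scope Z_scope.

Theorem corollary5p2 (n : nat) : 2 <= n ->
  forall x : ptrans n, inS x -> tcomp x x = tcomp (tcomp x x) x.
Proof.
move=> n_ge2 x /inS_coherent[d x_shift]; apply/ffunP=> p; rewrite !ffunE.
case xp: (x p) => [q|] //=.
have [d0|d_neq0] := Z.eq_dec d 0%Z.
- by rewrite d0 in x_shift; have xq := coherent_shift0_fix x_shift xp; rewrite xq /= xq.
- by rewrite (coherent_shift_sq_undef n_ge2 d_neq0 x_shift xp).
Qed.
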